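(* Let $\mathcal{B}$ be a finite relational structure with domain $B$ over signature $\sigma$, and let $f$ be a shop on $B$ that is an equivalence relation (i.e. there is an equivalence relation $\sim$ on $B$ with $f(x)$ equal to the $\sim$-class of $x$ for every $x$) and that is a she of $\mathcal{B}$. Then for every sentence $\varphi$ of $\{\exists,\forall,\wedge,\vee\}$-FO over $\sigma$, $\mathcal{B}\models\varphi$ if and only if $\mathcal{B}_{/f}\models\varphi$; that is, the problems $\{\exists,\forall,\wedge,\vee\}$-FO$(\mathcal{B})$ and $\{\exists,\forall,\wedge,\vee\}$-FO$(\mathcal{B}_{/f})$ coincide.
   Context: $\{\exists,\forall,\wedge,\vee\}$-FO is the positive equality-free fragment of first-order logic: formulas built from atomic formulas $R(w_1,\ldots,w_r)$ ($R\in\sigma$) using only $\wedge,\vee,\exists,\forall$. The problem $\{\exists,\forall,\wedge,\vee\}$-FO$(\mathcal{C})$ takes as input such a sentence and asks whether $\mathcal{C}$ satisfies it. A shop on $B$ is a map $f:B\to\mathcal{P}(B)\setminus\{\emptyset\}$ such that every $y\in B$ lies in some $f(x)$. A she of $\mathcal{B}$ is a shop $f$ such that for every $R\in\sigma$ of arity $i$, if $\mathcal{B}\models R(x_1,\ldots,x_i)$ then $\mathcal{B}\models R(y_1,\ldots,y_i)$ for all $y_j\in f(x_j)$. For $f$ an equivalence relation, $\mathcal{B}_{/f}$ is the $\sigma$-structure whose elements are the equivalence classes of $f$, in which $R(\tilde b_1,\ldots,\tilde b_r)$ holds iff $\mathcal{B}\models R(b_1,\ldots,b_r)$ for some representatives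 $b_j\in\tilde b_j$. *)

From mathcomp Require Import all_boot.
Set Implicit Arguments.
Unset Strict Implicit.
Unset Printing Implicit Defensive.

Section FO.
Variables (S : Type) (ar : S -> nat).

Record structure := Structure {
  dom :> finType;
  interp : forall R : S, (ar R).-tuple dom -> bool
}.

Inductive form :=
  | Atom (R : S) (w : (ar R).-tuple nat)
  | And (p q : form)
  | Or (p q : form)
  | Ex (x : nat) (p : form)
  | All (x : nat) (p : form).

Fixpoint fv (p : form) : seq nat :=
  match p with
  | Atom _ w => val w
  | And p q | Or p q => fv p ++ fv q
  | Ex x p | All x p => filter (fun y => y != x) (fv p)
  end.

Definition sentence (p : form) : Prop := fv p = [::].

Definition upd (T : Type) (env : nat -> T) (x : nat) (b : T) : nat -> T :=
  fun y => if y == x then b else env y.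

Fixpoint sat (M : structure) (env : nat -> M) (p : form) : Prop :=
  match p with
  | Atom R w => interp (map_tuple env w)
  | And p q => sat env p /\ sat env q
  | Or p q => sat env p \/ sat env q
  | Ex x p => exists b : M, sat (upd env x b) p
  | All x p => forall b : M, sat (upd env x b) p
  end.

(* M |= p (for a sentence p, on a nonempty domain, the environment is irrelevant). *)
Definition models (M : structure) (p : form) : Prop := forall env : nat -> M, sat env p.

Definition is_shop (B : finType) (f : B -> {set B}) : Prop :=
  (forall x, f x != set0) /\ (forall y, exists x, y \in f x).

Definition is_equiv_shop (B : finType) (f : B -> {set B}) : Prop :=
  exists r : rel B, equivalence_rel r /\ forall x, f x = [set y | r x y].

Definition is_she (M : structure) (f : M -> {set M}) : Prop :=
  is_shop f /\
  forall (R : S) (t u : (ar R).-tuple M),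
    interp t -> (forall i, tnth u i \in f (tnth t i)) -> interp u.

Definition classes (M : structure) (f : M -> {set M}) : {set {set M}} :=
  [set f x | x in M].

Definition quot_dom (M : structure) (f : M -> {set M}) : finType :=
  {C : {set M} | C \in classes f}.

Definition quot_rel (M : structure) (f : M -> {set M}) (R : S)
  (t : (ar R).-tuple (quot_dom f)) : bool :=
  [exists u : (ar R).-tuple M,
     [forall i, tnth u i \in val (tnth t i)] && interp u].

Definition quotient (M : structure) (f : M -> {set M}) : structure :=
  @Structure (quot_dom f) (@quot_rel M f).

End FO.

From mathcomp Require Import all_boot.
Set Implicit Arguments.
Unset Strict Implicit.

(* The projection x |-> f x onto the quotient preserves and reflects
   satisfaction of every positive equality-free formula: atoms are preserved
   because x \in f x, reflected because f is a she and membership in a class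
   is symmetric, and the projection is surjective, so the quantifier cases go
   through.  The equivalence thus holds for arbitrary formulas under
   corresponding environments. *)

Section Quotient.
Variables (S : Type) (ar : S -> nat) (M : structure ar) (f : M -> {set M}).

Lemma class_in_classes (x : M) : f x \in classes f.
Proof. exact: imset_f. Qed.

Definition quot_proj (x : M) : quotient f := exist _ (f x) (class_in_classes x).

Lemma quot_proj_surj (c : quotient f) : exists x, quot_proj x = c.
Proof.
case: c => C C_cls; have /imsetP [x _ C_def] := C_cls; exists x.
exact: val_inj.
Qed.

Lemma quot_env_lift (envq : nat -> quotient f) :
  exists env : nat -> M, forall n, envq n = quot_proj (env n).
Proof.
have lift n : exists x, quot_proj x == envq n.
  by case: (quot_proj_surj (envq n)) => x <-; exists x.
by exists (fun n => xchoose (lift n)) => n; rewrite (eqP (xchooseP (lift n))).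
Qed.

Lemma upd_quot_proj (env : nat -> M) (envq : nat -> quotient f) x b :
  (forall n, envq n = quot_proj (env n)) ->
  forall n, upd envq x (quot_proj b) n = quot_proj (upd env x b n).
Proof. by move=> E n; rewrite /upd; case: (n == x). Qed.

Hypotheses (f_equiv : is_equiv_shop f) (f_she : is_she f).

Lemma mem_class_self (x : M) : x \in f x.
Proof.
by case: f_equiv => r [r_equiv ->]; rewrite inE; case: (r_equiv x x x).
Qed.

Lemma mem_class_sym (x y : M) : y \in f x -> x \in f y.
Proof.
case: f_equiv => r [r_equiv f_def]; rewrite !f_def !inE => rxy.
by case: (r_equiv x y x) => _ <-; case: (r_equiv x x x).
Qed.

Lemma quot_rel_proj (R : S) (t : (ar R).-tuple M) :
  quot_rel (map_tuple quot_proj t) = interp t.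
Proof.
apply/existsP/idP => [[u /andP [/forallP u_in u_rel]] | t_rel].
- case: f_she => _ preserve; apply: (preserve _ u) => // i.
  by apply: mem_class_sym; have := u_in i; rewrite tnth_map.
- exists t; rewrite t_rel andbT; apply/forallP => i.
  by rewrite tnth_map mem_class_self.
Qed.

Lemma sat_quot_proj (p : form ar) (env : nat -> M) (envq : nat -> quotient f) :
  (forall n, envq n = quot_proj (env n)) -> (sat env p <-> sat envq p).
Proof.
elim: p env envq => [R w | p IHp q IHq | p IHp q IHq | x p IHp | x p IHp]
  env envq E /=.
- have -> : map_tuple envq w = map_tuple quot_proj (map_tuple env w).
    by apply: eq_from_tnth => i; rewrite !tnth_map E.
  by rewrite -quot_rel_proj.
- by have := IHp _ _ E; have := IHq _ _ E; tauto.
- by have := IHp _ _ E; have := IHq _ _ E; tauto.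
- split=> [[b sat_b] | [c]].
  + by exists (quot_proj b); apply/(IHp _ _ (upd_quot_proj x b E)).
  + have [b <-] := quot_proj_surj c => sat_b.
    by exists b; apply/(IHp _ _ (upd_quot_proj x b E)).
- split=> sat_all => [c | b].
  + have [b <-] := quot_proj_surj c.
    exact/(IHp _ _ (upd_quot_proj x b E)).
  + exact/(IHp _ _ (upd_quot_proj x b E)).
Qed.

End Quotient.

Theorem lemma3p10 (S : Type) (ar : S -> nat) (M : structure ar)
  (f : M -> {set M}) :
  0 < #|M| ->
  is_shop f -> is_equiv_shop f -> is_she f ->
  forall phi : form ar, sentence phi ->
    (models M phi <-> models (quotient f) phi).
Proof.
move=> _ _ f_equiv f_she phi _; split=> sat_phi env.
- have [envM E] := quot_env_lift env.
  exact/(sat_quot_proj f_equiv f_she phi E).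
- exact/(sat_quot_proj f_equiv f_she phi (envq := quot_proj f \o env)).
Qed.
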